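(* For all $n\ge0$, all $0\le k\le n$ and all complex $a,b,c_0,c_\infty$, $$E_{n,k}(a,b;c_0,c_\infty)=\sum_{j=k}^n(-1)^{j-k}\binom jk(c_0+c_\infty)^{\overline{n-j},b}\,S_{n,n-j}(-a,b;c_\infty),$$ $$(c_0+c_\infty)^{\overline{n-k},b}\,S_{n,n-k}(-a,b;c_\infty)=\sum_{j=k}^n\binom jk E_{n,j}(a,b;c_0,c_\infty).$$
   Context: GKP triangle $\left[\begin{array}{cc|c}\alpha,&\beta&\gamma\\ \alpha',&\beta'&\gamma'\end{array}\right]_{n,k}$: defined by $T_{0,0}=1$, $T_{n,k}=0$ if $n<0$, $k<0$ or $k>n$, and $T_{n+1,k+1}=[\alpha n+\beta(k+1)+\gamma]T_{n,k+1}+[\alpha' n+\beta' k+\gamma']T_{n,k}$ for $n\ge0$, $k\in\mathbb Z$. Hsu–Shiue Stirling numbers: $S_{n,k}(a,b;r):=\left[\begin{array}{cc|c}-a,&b&r\\ 0,&0&1\end{array}\right]_{n,k}$. Generalized Eulerian numbers: $E_{n,k}(a,b;c_0,c_\infty):=\left[\begin{array}{cc|c}-a,&b&c_0\\ a+b,&-b&c_\infty\end{array}\right]_{n,k}$, i.e. $E_{n+1,k+1}=[-an+b(k+1)+c_0]E_{n,k+1}+[(a+b)n-bk+c_\infty]E_{n,k}$. $(x)^{\overline n,b}=\prod_{i=0}^{n-1}(x+ib)$, $(x)^{\underline n,a}=\prod_{i=0}^{n-1}(x-ia)$. *)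

From HB Require Import structures.
From mathcomp Require Import all_boot all_order all_algebra.
From mathcomp Require Import complex.
From mathcomp Require Import Rstruct.
From Stdlib Require Import Reals.
Set Implicit Arguments. Unset Strict Implicit. Unset Printing Implicit Defensive.
Import Order.TTheory GRing.Theory Num.Theory.
Local Open Scope ring_scope.

Notation C := (complex Rdefinitions.R).

(* GKP triangle [alpha, beta | gamma ; alpha', beta' | gamma']_{n,k}, for k : nat. *)
Fixpoint gkp (al be ga al' be' ga' : C) (n k : nat) : C :=
  match n with
  | 0%N => (k == 0%N)%:R
  | n'.+1 =>
      (al * n'%:R + be * k%:R + ga) * gkp al be ga al' be' ga' n' k
      + match k with
        | 0%N => 0
        | k'.+1 => (al' * n'%:R + be' * k'%:R + ga') * gkp al be ga al' be' ga' n' k'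
        end
  end.

Definition hsS (a b r : C) (n k : nat) : C := gkp (- a) b r 0 0 1 n k.

Definition genE (a b c0 cinf : C) (n k : nat) : C := gkp (- a) b c0 (a + b) (- b) cinf n k.

Definition risef (x b : C) (n : nat) : C := \prod_(i < n) (x + i%:R * b).

(* Put G_{n,m} := \sum_j C(j,m) E_{n,j}.  Substituting the triangular recurrence of E and
   using C(j+1,m) = C(j,m) + C(j,m-1) and m C(j,m) = (j-m+1) C(j,m-1) shows that G satisfies
     G_{n+1,m} = (b(n-m) + c0 + cinf) G_{n,m} + ((a+b)n - b(m-1) + cinf) G_{n,m-1},
   which is also the recurrence satisfied by (c0+cinf)^{\overline{n-m},b} S_{n,n-m}(-a,b;cinf).
   Both agree at n = 0, so they are equal: this is the second identity.  The first one follows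
   from it by binomial inversion. *)
From HB Require Import structures.
From mathcomp Require Import all_boot all_order all_algebra.
From mathcomp Require Import complex Rstruct.
From mathcomp Require Import ring zify.
Set Implicit Arguments. Unset Strict Implicit. Unset Printing Implicit Defensive.
Import GRing.Theory.
Local Open Scope ring_scope.

Lemma bin_trinomial k t i : (k <= i)%N ->
  ('C(t + k, k) * 'C(i, t + k) = 'C(i, k) * 'C(i - k, t))%N.
Proof.
move=> le_ki; have [le_tki | lt_itk] := leqP (t + k) i; last first.
  by rewrite (bin_small lt_itk) (@bin_small (i - k)) ?muln0 // ltn_subLR // addnC.
have le_t_ik : (t <= i - k)%N by rewrite leq_subRL // addnC.
apply/eqP; rewrite -(eqn_pmul2r (_ : 0 < k`! * t`! * (i - (t + k))`!)%N); last first.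
  by rewrite !muln_gt0 !fact_gt0.
have fact_tk := bin_fact (leq_addl t k); rewrite addnK in fact_tk.
have fact_ik := bin_fact le_t_ik; rewrite -subnDA addnC in fact_ik.
apply/eqP; transitivity ('C(i, t + k) * (('C(t + k, k) * (k`! * t`!)) * (i - (t + k))`!))%N.
  by ring.
rewrite fact_tk (bin_fact le_tki) -(bin_fact le_ki) -fact_ik; ring.
Qed.

Section BinomialInversion.

Variable R : comNzRingType.

Lemma natr_mul_binS (i m : nat) :
  m.+1%:R * 'C(i, m.+1)%:R = (i%:R - m%:R) * 'C(i, m)%:R :> R.
Proof.
have [lt_im | le_mi] := ltnP i m; first by rewrite !bin_small ?mulr0 // ltnW.
by rewrite -natrB // -!natrM mul_bin_left.
Qed.

Lemma sum_alternating_bin m :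
  \sum_(0 <= t < m.+1) (-1) ^+ t * 'C(m, t)%:R = (m == 0%N)%:R :> R.
Proof.
have := exprDn (1 : R) (-1) m; rewrite addrN expr0n => ->.
by rewrite big_mkord; apply: eq_bigr => t _; rewrite expr1n mul1r mulr_natr.
Qed.

Lemma sumr_nat_widenl0 (F : nat -> R) k N : (k <= N)%N ->
  (forall j, (j < k)%N -> F j = 0) ->
  \sum_(k <= j < N) F j = \sum_(0 <= j < N) F j.
Proof.
move=> le_kN F_low; rewrite [RHS](big_cat_nat (leq0n k) le_kN) /=.
rewrite [X in _ = X + _]big1_seq ?add0r //.
by move=> j /andP[_]; rewrite mem_index_iota => /andP[_]; apply: F_low.
Qed.

Lemma sum_signed_bin_bin i k N : (i < N)%N ->
  \sum_(0 <= j < N) (-1) ^+ (j - k) * 'C(j, k)%:R * 'C(i, j)%:R = (i == k)%:R :> R.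
Proof.
move=> lt_iN; have [lt_ik | le_ki] := ltnP i k.
  rewrite (ltn_eqF lt_ik) big1_seq // => j _.
  have [lt_jk | le_kj] := ltnP j k; first by rewrite bin_small // mulr0 mul0r.
  by rewrite (@bin_small i j) ?mulr0 // (leq_trans lt_ik le_kj).
rewrite -(sumr_nat_widenl0 (k := k)) => [||j lt_jk]; last 2 first.
- exact: leq_trans le_ki (ltnW lt_iN).
- by rewrite bin_small // mulr0 mul0r.
rewrite -{1}[k]add0n big_addn.
transitivity (\sum_(0 <= t < N - k) 'C(i, k)%:R * ((-1) ^+ t * 'C(i - k, t)%:R) : R).
  by apply: eq_bigr => t _; rewrite addnK -mulrA -natrM bin_trinomial // natrM; ring.
have le_ikN : ((i - k).+1 <= N - k)%N by lia.
rewrite -mulr_sumr (big_cat_nat (leq0n _) le_ikN) /= [X in _ + X]big1_seq ?addr0; last first.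
  by move=> t /andP[_]; rewrite mem_index_iota => /andP[lt_t _]; rewrite bin_small ?mulr0.
rewrite sum_alternating_bin subn_eq0.
have [-> | ne_ik] := eqVneq i k; first by rewrite binn leqnn mul1r.
by rewrite leqNgt ltn_neqAle eq_sym ne_ik le_ki mulr0.
Qed.

Lemma binomial_inversion (f : nat -> R) n k : (k <= n)%N ->
  \sum_(0 <= j < n.+1) (-1) ^+ (j - k) * 'C(j, k)%:R *
     (\sum_(0 <= i < n.+1) 'C(i, j)%:R * f i) = f k.
Proof.
move=> le_kn; under eq_bigr do rewrite mulr_sumr.
rewrite exchange_big /=; transitivity (\sum_(0 <= i < n.+1) f i * (i == k)%:R).
  apply: eq_big_nat => i /andP[_ lt_in].
  by rewrite -(sum_signed_bin_bin k lt_in) mulr_sumr; apply: eq_bigr => j _; ring.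
rewrite (bigD1_seq k) ?mem_index_iota ?iota_uniq //= eqxx mulr1 big1 ?addr0 //.
by move=> i /negPf ->; rewrite mulr0.
Qed.

End BinomialInversion.

Lemma gkp_small al be ga al' be' ga' n k : (n < k)%N ->
  gkp al be ga al' be' ga' n k = 0.
Proof.
elim: n k => [|n IHn] [|k] //= lt_nk.
by rewrite (IHn k.+1) ?(IHn k) ?mulr0 ?addr0 //; apply: ltnW.
Qed.

Lemma risef0 x b : risef x b 0 = 1.
Proof. by rewrite /risef big_ord0. Qed.

Lemma risefS x b t : risef x b t.+1 = risef x b t * (x + t%:R * b).
Proof. by rewrite /risef big_ord_recr. Qed.

Section EulerianBinomialSums.

Variables a b c0 cinf : C.

Local Notation E := (genE a b c0 cinf).
Local Notation S := (hsS (- a) b cinf).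
Local Notation rise := (risef (c0 + cinf) b).

Lemma genES n j : E n.+1 j =
  (- a * n%:R + b * j%:R + c0) * E n j +
  (if j is i.+1 then ((a + b) * n%:R + - b * i%:R + cinf) * E n i else 0).
Proof. by case: j. Qed.

Lemma hsS_oppS n t : S n.+1 t =
  (a * n%:R + b * t%:R + cinf) * S n t + (if t is t'.+1 then S n t' else 0).
Proof. by case: t => [|t]; rewrite /hsS /= opprK ?mul0r ?add0r ?mul1r ?addr0. Qed.

Definition genE_binsum n m := \sum_(0 <= j < n.+1) 'C(j, m)%:R * E n j.

Lemma genE_binsum_small n : genE_binsum n n.+1 = 0.
Proof.
rewrite /genE_binsum big1_seq // => j; rewrite mem_index_iota => /andP[_ lt_jn].
by rewrite bin_small ?mul0r.
Qed.

Lemma genE_binsumS n m : genE_binsum n.+1 m =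
  (b * (n%:R - m%:R) + (c0 + cinf)) * genE_binsum n m
  + (if m is m'.+1 then ((a + b) * n%:R - b * m'%:R + cinf) * genE_binsum n m' else 0).
Proof.
rewrite /genE_binsum; under eq_bigr do rewrite genES mulrDr.
rewrite big_split /= big_nat_recr //= {2}/genE gkp_small // !mulr0 addr0.
rewrite [\sum_(0 <= i < n.+2) _]big_nat_recl //= mulr0 add0r mulr_sumr -big_split /=.
case: m => [|m]; first by rewrite addr0; apply: eq_bigr => i _; rewrite !bin0; ring.
rewrite mulr_sumr -big_split /=; apply: eq_bigr => i _.
rewrite binS natrD; set Eni := E n i.
have bin_rel := natr_mul_binS C i m.
apply/eqP; rewrite -subr_eq0; apply/eqP.
transitivity (b * Eni * (m.+1%:R * 'C(i, m.+1)%:R - (i%:R - m%:R) * 'C(i, m)%:R)).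
  by ring.
by rewrite bin_rel subrr mulr0.
Qed.

Lemma genE_binsumE n m : (m <= n)%N -> genE_binsum n m = rise (n - m) * S n (n - m).
Proof.
elim: n m => [|n IHn] m.
  by rewrite leqn0 => /eqP ->; rewrite /genE_binsum big_nat1 risef0 /hsS /genE /= bin0 !mulr1.
rewrite genE_binsumS; case: m => [|m] le_mn.
  rewrite IHn // !subn0 hsS_oppS risefS [S n n.+1]gkp_small // addr0; ring.
rewrite subSS (IHn m) //; move: le_mn; rewrite ltnS leq_eqVlt => /orP[/eqP -> | lt_mn].
  by rewrite genE_binsum_small subnn hsS_oppS /= risef0; ring.
rewrite IHn // -(subnSK lt_mn) hsS_oppS risefS.
have -> : n%:R = ((n - m.+1) + m.+1)%:R :> C by rewrite subnK.
rewrite !natrD; ring.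
Qed.

End EulerianBinomialSums.

Theorem mainTheorem9 (n k : nat) (a b c0 cinf : C) : (k <= n)%N ->
  genE a b c0 cinf n k =
    \sum_(k <= j < n.+1)
      (-1) ^+ (j - k) * ('C(j, k))%:R * risef (c0 + cinf) b (n - j)
        * hsS (- a) b cinf n (n - j)
  /\
  risef (c0 + cinf) b (n - k) * hsS (- a) b cinf n (n - k) =
    \sum_(k <= j < n.+1) ('C(j, k))%:R * genE a b c0 cinf n j.
Proof.
move=> le_kn; split; last first.
  rewrite -genE_binsumE // sumr_nat_widenl0 // => [|j lt_jk]; last by rewrite bin_small ?mul0r.
  exact: leqW.
rewrite -[LHS](binomial_inversion _ le_kn).
rewrite -(sumr_nat_widenl0 (k := k)) => [||j lt_jk]; last 2 first.
- exact: leqW.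
- by rewrite bin_small ?mulr0 ?mul0r.
by apply: eq_big_nat => j /andP[_ lt_jn]; rewrite -[RHS]mulrA -genE_binsumE //.
Qed.
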